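(* Let $n\ge 5$ and let $\sigma$ be a maximal simplex of $\Delta_n$. Suppose there are a vertex $v$, distinct $i_0,j_0,k_0\in[n]$, and distinct $p_0,q_0\in[n]\setminus\{i_0,j_0,k_0\}$ such that $\{v^{i_0,j_0},v^{i_0,k_0},v^{j_0,k_0},v^{p_0},v^{q_0}\}\subseteq\sigma$. Then $\sigma=N(v)\cup K_v^{i_0,j_0,k_0}$.
   Context: $\mathbb{I}_n$ is the $n$-dimensional hypercube graph on vertex set $\{0,1\}^n$ (adjacent iff differing in exactly one coordinate), with Hamming distance $d(v,w)=\#\{i: v(i)\ne w(i)\}$. $\Delta_n=\mathcal{VR}(\mathbb{I}_n;3)$ is the simplicial complex whose simplices are the subsets $\sigma\subseteq\{0,1\}^n$ with $d(x,y)\le 3$ for all $x,y\in\sigma$. $[n]=\{1,\dots,n\}$. For a vertex $v$ and distinct $i_1,\dots,i_k$, $v^{i_1,\dots,i_k}$ is $v$ with exactly coordinates $i_1,\dots,i_k$ changed. $N(v)=\{v^i:i\in[n]\}$. For distinct $i,j,k$, $K_v^{i,j,k}=\{v,v^{i,j},v^{j,k},v^{i,k}\}$. *)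

From mathcomp Require Import all_boot.
Set Implicit Arguments. Unset Strict Implicit. Unset Printing Implicit Defensive.

(* Vertices of the hypercube I_n: {0,1}^n, coordinates indexed by 'I_n
   (0-based stand-in for [n] = {1,..,n}). *)
Definition vert (n : nat) := {ffun 'I_n -> bool}.

Definition hdist (n : nat) (v w : vert n) : nat := #|[set i | v i != w i]|.

(* sigma is a simplex of Delta_n = VR(I_n; 3). *)
Definition is_simplex (n : nat) (s : {set vert n}) : Prop :=
  s != set0 /\ forall x y, x \in s -> y \in s -> hdist x y <= 3.

Definition is_maximal_simplex (n : nat) (s : {set vert n}) : Prop :=
  is_simplex s /\ forall t : {set vert n}, is_simplex t -> s \subset t -> t = s.

Definition flip (n : nat) (v : vert n) (S : {set 'I_n}) : vert n :=
  [ffun i => if i \in S then ~~ v i else v i].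

Definition nbhd (n : nat) (v : vert n) : {set vert n} :=
  [set flip v [set i] | i : 'I_n].

Definition Kv (n : nat) (v : vert n) (i j k : 'I_n) : {set vert n} :=
  [set v; flip v [set i; j]; flip v [set j; k]; flip v [set i; k]].

From mathcomp Require Import all_boot zify.
Set Implicit Arguments. Unset Strict Implicit. Unset Printing Implicit Defensive.

(* Write every vertex as v^D; then d(v^A, v^B) = |A| + |B| - 2|A ∩ B| is the
   size of the symmetric difference of A and B.  The vertices v^D with D empty,
   a singleton or a pair inside {i,j,k} are pairwise at distance at most 3, so
   they form a simplex, and by maximality it suffices to show that it contains
   sigma.  If v^D is within distance 3 of v^p and v^q then |D| <= 4, and
   |D| >= 3 forces p, q in D; being within distance 3 of the three v^{a,b}
   forces D to meet every pair of {i,j,k} once |D| >= 2, and to contain it once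
   |D| >= 4.  Counting the elements of D among i, j, k, p, q rules out
   |D| >= 3, and for |D| = 2 leaves only the pairs of {i,j,k}. *)

Section SymmetricDifference.

Variable T : finType.
Implicit Types (A B D : {set T}) (a b : T).

Definition symdist A B := #|A :\: B| + #|B :\: A|.

Lemma symdist_card A B : symdist A B + 2 * #|A :&: B| = #|A| + #|B|.
Proof. by rewrite /symdist -(cardsID B A) -(cardsID A B) setIC; lia. Qed.

Lemma symdist_le_cardU A B : symdist A B <= #|A :|: B|.
Proof. by have := symdist_card A B; rewrite cardsU; lia. Qed.

Lemma cardsI1 D a : #|D :&: [set a]| = (a \in D).
Proof.
have [aD | aD] := boolP (a \in D); first by rewrite (setIidPr _) ?cards1 ?sub1set.
by apply/eqP; rewrite cards_eq0 setI_eq0 disjoint_sym disjoints1.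
Qed.

Lemma cardsI2_le D a b : #|D :&: [set a; b]| <= (a \in D) + (b \in D).
Proof. by rewrite setIUr -!cardsI1 cardsU; lia. Qed.

Lemma symdist1_bound D a : symdist D [set a] <= 3 -> #|D| <= 2 + 2 * (a \in D).
Proof. by have := symdist_card D [set a]; rewrite cards1 cardsI1; lia. Qed.

Lemma symdist2_bound D a b : a != b ->
  symdist D [set a; b] <= 3 -> #|D| <= 1 + 2 * ((a \in D) + (b \in D)).
Proof.
move=> ab; have := symdist_card D [set a; b]; have := cardsI2_le D a b.
by rewrite cards2 ab; lia.
Qed.

Lemma count_mem_le_card D (s : seq T) : uniq s -> count (mem D) s <= #|D|.
Proof.
move=> s_uniq; rewrite -size_filter -(card_uniqP (filter_uniq _ s_uniq)).
by apply: subset_leq_card; apply/subsetP => x; rewrite mem_filter => /andP[].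
Qed.

Variables i j k : T.

Definition small_or_edge D :=
  (#|D| <= 1) || (D \in [set [set i; j]; [set j; k]; [set i; k]]).

Lemma small_or_edge_symdist A B :
  small_or_edge A -> small_or_edge B -> symdist A B <= 3.
Proof.
have card_le2 E : small_or_edge E -> #|E| <= 2.
  case/orP => [/leqW // | ].
  by rewrite !inE -orbA => /or3P[] /eqP->; rewrite cards2 ltnS leq_b1.
have edge_sub E :
    E \in [set [set i; j]; [set j; k]; [set i; k]] -> E \subset [set i; j; k].
  rewrite !inE -orbA => /or3P[] /eqP->;
  by apply/subsetP => x; rewrite !inE => /orP[]->; rewrite ?orbT.
move=> hA hB; apply: leq_trans (symdist_le_cardU A B) _.
case/orP: (hA) => [A_le1 | A_edge].
  by have := card_le2 _ hB; rewrite cardsU; lia.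
case/orP: (hB) => [B_le1 | B_edge].
  by have := card_le2 _ hA; rewrite cardsU; lia.
apply: (@leq_trans #|[set i; j; k]|).
  by apply: subset_leq_card; rewrite subUset !edge_sub.
by rewrite -setUA cardsU1 cards2; case: (i \notin _); case: (j != k).
Qed.

Lemma small_or_edge_of_symdist p q D :
  i != j -> i != k -> j != k ->
  p \notin [set i; j; k] -> q \notin [set i; j; k] -> p != q ->
  symdist D [set i; j] <= 3 -> symdist D [set j; k] <= 3 ->
  symdist D [set i; k] <= 3 -> symdist D [set p] <= 3 -> symdist D [set q] <= 3 ->
  small_or_edge D.
Proof.
move=> ij ik jk hp hq pq.
move=> /(symdist2_bound ij) Dij /(symdist2_bound jk) Djk /(symdist2_bound ik) Dik.
move=> /symdist1_bound Dp /symdist1_bound Dq.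
have Dcount : (i \in D) + (j \in D) + (k \in D) + (p \in D) + (q \in D) <= #|D|.
  have := @count_mem_le_card D [:: i; j; k; p; q]; rewrite /= addn0 !addnA; apply.
  move: hp hq; rewrite /= !inE !negb_or.
  move=> /andP[/andP[pi pj] pk] /andP[/andP[qi qj] qk].
  by rewrite ij ik jk pq ![_ == p]eq_sym ![_ == q]eq_sym pi pj pk qi qj qk.
clear hp hq pq.
have D_le2 : #|D| <= 2 by lia.
rewrite /small_or_edge; case: leqP => //= D_gt1.
have {D_le2 D_gt1} D2 : #|D| = 2 by lia.
have edge a b : a != b -> a \in D -> b \in D -> D = [set a; b].
  move=> ab aD bD; apply/esym/eqP; rewrite eqEcard cards2 ab D2 andbT.
  by apply/subsetP => x; rewrite !inE => /orP[]/eqP->.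
have : [|| (i \in D) && (j \in D), (j \in D) && (k \in D) | (i \in D) && (k \in D)].
  have : 1 < (i \in D) + (j \in D) + (k \in D) by lia.
  by case: (i \in D) (j \in D) (k \in D) => [] [] [].
case/or3P=> /andP[aD bD];
  [rewrite (edge i j) | rewrite (edge j k) | rewrite (edge i k)] => //;
  by rewrite !inE eqxx ?orbT.
Qed.

End SymmetricDifference.

Section Flips.

Variables (n : nat) (v : vert n).
Implicit Types (A B D : {set 'I_n}) (x : vert n).

Lemma flip0 : flip v set0 = v.
Proof. by apply/ffunP => l; rewrite ffunE inE. Qed.

Lemma flip_support x : flip v [set l | x l != v l] = x.
Proof. by apply/ffunP => l; rewrite !ffunE inE; case: (x l); case: (v l). Qed.

Lemma flip_inj : injective (flip v).
Proof.
move=> A B /ffunP eqAB; apply/setP => l.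
by move: (eqAB l); rewrite !ffunE; case: (l \in A); case: (l \in B); case: (v l).
Qed.

Lemma hdist_flip A B : hdist (flip v A) (flip v B) = symdist A B.
Proof.
rewrite /hdist.
have -> : [set l | flip v A l != flip v B l] = (A :\: B) :|: (B :\: A).
  by apply/setP => l; rewrite !inE !ffunE; case: (l \in A); case: (l \in B); case: (v l).
rewrite /symdist cardsU; suff -> : (A :\: B) :&: (B :\: A) = set0 by rewrite cards0 subn0.
by apply/setP => l; rewrite !inE; case: (l \in A); case: (l \in B).
Qed.

Lemma mem_nbhd D : (flip v D \in nbhd v) = (#|D| == 1).
Proof.
by apply/imsetP/cards1P => [[l _ /flip_inj ->] | [l ->]]; exists l.
Qed.

Lemma mem_nbhd_Kv (i j k : 'I_n) D :
  (flip v D \in nbhd v :|: Kv v i j k) = small_or_edge i j k D.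
Proof.
have flip_eq S : (flip v D == flip v S) = (D == S) := inj_eq flip_inj D S.
have flip_eq_v : (flip v D == v) = (D == set0) by rewrite -{2}flip0 flip_eq.
rewrite /small_or_edge /Kv !inE mem_nbhd flip_eq_v !flip_eq.
by rewrite leq_eqVlt ltnS leqn0 cards_eq0 -!orbA.
Qed.

Lemma nbhd_Kv_simplex (i j k : 'I_n) : is_simplex (nbhd v :|: Kv v i j k).
Proof.
split; first by apply/set0Pn; exists v; rewrite !inE eqxx orbT.
move=> x y; rewrite -(flip_support x) -(flip_support y) !mem_nbhd_Kv hdist_flip.
exact: small_or_edge_symdist.
Qed.

End Flips.

Theorem mainTheorem15 (n : nat) (hn : 5 <= n) (sigma : {set vert n})
  (hmax : is_maximal_simplex sigma) (v : vert n) (i0 j0 k0 p0 q0 : 'I_n)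
  (hij : i0 != j0) (hik : i0 != k0) (hjk : j0 != k0)
  (hp : p0 \notin [set i0; j0; k0]) (hq : q0 \notin [set i0; j0; k0])
  (hpq : p0 != q0)
  (hsub : [set flip v [set i0; j0]; flip v [set i0; k0]; flip v [set j0; k0];
           flip v [set p0]; flip v [set q0]] \subset sigma) :
  sigma = nbhd v :|: Kv v i0 j0 k0.
Proof.
have [[_ sigma_dist] sigma_max] := hmax.
apply/esym/sigma_max; first exact: nbhd_Kv_simplex.
apply/subsetP => x x_sigma; rewrite -(flip_support v x) mem_nbhd_Kv.
have dist_le3 S : flip v S \in [set flip v [set i0; j0]; flip v [set i0; k0];
    flip v [set j0; k0]; flip v [set p0]; flip v [set q0]] ->
    symdist [set l | x l != v l] S <= 3.
  move=> /(subsetP hsub) S_sigma.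
  by rewrite -(hdist_flip v) flip_support; exact: sigma_dist x_sigma S_sigma.
by apply: (small_or_edge_of_symdist hij hik hjk hp hq hpq); apply: dist_le3;
  rewrite !inE eqxx ?orbT.
Qed.
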